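(* Let $\Theta=\{\theta_1,\dots,\theta_n\}$ with $n\ge 2$, and suppose the pair $(\mathcal{E},C)$ satisfies Assumption (A) below. Then there exists a contract $(u,d)$ with $u>0,d>0$ that screens the uninformed Bob. That is, $W(\mu)\ge 0$ for every prior $\mu\in\Delta$, while $$\sup_{\sigma\in\Delta}\ \min_{1\le j\le n}\,(u-d\,\sigma_j)<0.$$ Assumption (A): there exist $\varepsilon>0$, $\eta>0$ and $T\in\mathbb{R}_+$ such that for every $\mu\in\Delta$ with $\|\mu-\mathbf{\tfrac1n}\|<\eta$ there is an experiment $E_\mu\in\mathcal{E}$ with $\Upsilon(E_\mu,\mu)>\varepsilon$ and $C(E_\mu,\mu)\le T$. Here $\mathbf{\tfrac1n}$ denotes the uniform distribution $(1/n,\dots,1/n)$.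
   Context: **States and beliefs.** $\Theta=\{\theta_1,\dots,\theta_n\}$ is a finite set of states. $\Delta=\Delta(\Theta)$ is the simplex of probability vectors $\mu=(\mu_1,\dots,\mu_n)$. **Experiments.** An experiment is a pair $E=(S,\chi)$, where $S$ is a measurable signal space and $\chi(\theta_i)=P_i$ is a probability measure on $S$. Fix a $\sigma$-finite measure $\nu$ on $S$ dominating $P_1,\dots,P_n$, and let $p_i=dP_i/d\nu$. Define $$\Upsilon(E,\mu)=\min_i \mu_i-\int_S \min_i\{\mu_i p_i(s)\}\,d\nu(s),$$ which does not depend on the choice of $\nu$. $\mathcal{E}$ is a given set of available experiments. $C:\mathcal{E}\times\Delta\to\mathbb{R}_+\cup\{\infty\}$ is a cost functional, with $C(E,\mu)$ the cost of experiment $E$ to a Bob with prior $\mu$. **Contract.** A contract is a pair $(u,d)$ with $u>0$ and $d>0$. Bob either rejects (payoff $0$) or accepts. If he accepts, he receives $u$ and announces a state (possibly at random). The true state is then drawn, and Bob pays $d$ if the announced state is the realized state. **Informed Bob.** The informed Bob has a prior $\mu\in\Delta$ and is an expected-utility maximizer. He may either acquire no information, or acquire one experiment $E\in\mathcal{E}$ at cost $C(E,\mu)$ and observe its signal. He then announces a state of minimal posterior probability. His optimal payoff from accepting is $$W(\mu)=\max\Big\{u-d\min_i\mu_i,\ \sup_{E\in\mathcal{E}}\Big[u-d\int_S\min_i\{\mu_ip_i(s)\}\,d\nu(s)-C(E,\mu)\Big]\Big\}.$$ He (weakly) prefers to accept iff $W(\mu)\ge 0$. **Uninformed Bob.** The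 uninformed Bob cannot acquire information. He evaluates a randomized announcement $\sigma\in\Delta$ by its worst-case payoff over states, $\min_j(u-d\sigma_j)$. He strictly prefers to reject iff $\sup_{\sigma\in\Delta}\min_j(u-d\sigma_j)<0$. **Screening.** A contract screens the uninformed Bob if the informed Bob prefers to accept it for every prior $\mu\in\Delta$, and the uninformed Bob strictly prefers to reject it. *)

From HB Require Import structures.
From mathcomp Require Import all_boot all_order all_algebra.
From mathcomp Require Import all_classical all_reals all_analysis.
Set Implicit Arguments. Unset Strict Implicit. Unset Printing Implicit Defensive.
Import Order.TTheory GRing.Theory Num.Theory.
Local Open Scope classical_set_scope.
Local Open Scope ring_scope.

(* An experiment with n states: a measurable signal space S, a sigma-finite
   dominating measure nu on S, and densities p_i = dP_i/dnu (so that
   P_i(A) = \int_A p_i dnu are probability measures). *)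
Record experiment (R : realType) (n : nat) := Experiment {
  ex_disp : measure_display;
  ex_S : measurableType ex_disp;
  ex_nu : {measure set ex_S -> \bar R};
  ex_nu_sfinite : sigma_finite setT ex_nu;
  ex_p : 'I_n -> ex_S -> R;
  ex_p_meas : forall i, measurable_fun setT (ex_p i);
  ex_p_ge0 : forall i s, 0 <= ex_p i s;
  ex_p_prob : forall i, (\int[ex_nu]_s (ex_p i s)%:E = 1)%E
}.

Definition simplex (R : realType) (n : nat) : set ('I_n -> R) :=
  [set mu | (forall i, 0 <= mu i) /\ \sum_i mu i = 1].

(* min_i f_i, as an extended real (equals the true minimum when n >= 1) *)
Definition emin (R : realType) (n : nat) (f : 'I_n -> R) : \bar R :=
  \big[Order.min/+oo%E]_i (f i)%:E.

Definition int_min (R : realType) (n : nat) (E : experiment R n) (mu : 'I_n -> R) : \bar R :=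
  (\int[@ex_nu _ _ E]_s emin (fun i => (mu i * @ex_p _ _ E i s)%R))%E.

Definition Upsilon (R : realType) (n : nat) (E : experiment R n) (mu : 'I_n -> R) : \bar R :=
  (emin mu - int_min E mu)%E.

Definition W (R : realType) (n : nat) (Ecal : experiment R n -> Prop)
  (C : experiment R n -> ('I_n -> R) -> \bar R) (u d : R) (mu : 'I_n -> R) : \bar R :=
  Order.max (u%:E - d%:E * emin mu)%E
    (ereal_sup [set x | exists E, Ecal E /\ x = (u%:E - d%:E * int_min E mu - C E mu)%E]).

Definition uninformed_value (R : realType) (n : nat) (u d : R) : \bar R :=
  ereal_sup [set emin (fun j => u - d * sigma j) | sigma in @simplex R n].

Definition assumptionA (R : realType) (n : nat) (Ecal : experiment R n -> Prop)
  (C : experiment R n -> ('I_n -> R) -> \bar R) : Prop :=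
  exists eps eta T : R, 0 < eps /\ 0 < eta /\ 0 <= T /\
    forall mu, @simplex R n mu ->
      Num.sqrt (\sum_i (mu i - n%:R^-1) ^+ 2) < eta ->
      exists E, Ecal E /\ (eps%:E < Upsilon E mu)%E /\ (C E mu <= T%:E)%E.

Definition screens (R : realType) (n : nat) (Ecal : experiment R n -> Prop)
  (C : experiment R n -> ('I_n -> R) -> \bar R) (u d : R) : Prop :=
  (forall mu, @simplex R n mu -> (0 <= W Ecal C u d mu)%E) /\
  (@uninformed_value R n u d < 0)%E.

From HB Require Import structures.
From mathcomp Require Import all_boot all_order all_algebra.
From mathcomp Require Import all_classical all_reals all_analysis.
From mathcomp Require Import ring lra.
Import Order.TTheory GRing.Theory Num.Theory.
Local Open Scope classical_set_scope.
Local Open Scope ring_scope.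

(* Write w = 1/n and fix the contract with penalty d = (T + 1)/eps and
   premium u = d w - g, where 0 < g <= min(1, d delta) and delta > 0 is a
   radius such that every prior whose coordinates all exceed w - delta lies
   in the eta-ball of Assumption (A).
   - Uninformed Bob: any announcement sigma has a coordinate sigma_k >= w,
     so his worst-case payoff is at most u - d w = -g < 0.
   - Informed Bob with min_i mu_i <= w - delta: acquiring no information
     already yields u - d min_i mu_i >= d delta - g >= 0.
   - Informed Bob with min_i mu_i > w - delta: the prior is close to uniform,
     so (A) provides an experiment E with Upsilon > eps and cost <= T, whose
     payoff is >= u - d (min_i mu_i - eps) - T >= d (w - min_i mu_i) + 1 - g,
     which is >= 0 since the minimal coordinate of a prior is at most w. *)

Section MinimumOverStates.
Context {R : realType} {n : nat}.
Implicit Types (f : 'I_n -> R).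

Lemma emin_attained f (j : 'I_n) :
  exists2 i0, emin f = (f i0)%:E & forall k, f i0 <= f k.
Proof.
have [i0 _ Ei0] := @eq_bigmin _ _ 'I_n +oo%E j predT (fun i => (f i)%:E)
  erefl (fun i _ => leey _).
exists i0 => // k; rewrite -lee_fin -Ei0.
exact: (@bigmin_le _ _ 'I_n +oo%E k (fun i => (f i)%:E)).
Qed.

Lemma emin_le f (k : 'I_n) : (emin f <= (f k)%:E)%E.
Proof. exact: (@bigmin_le _ _ 'I_n +oo%E k (fun i => (f i)%:E)). Qed.

Lemma minimiser_le_mean f i0 :
  (forall k, f i0 <= f k) -> n%:R * f i0 <= \sum_i f i.
Proof.
move=> minf; apply: le_trans (ler_sum _ (fun i _ => minf i)).
by rewrite sumr_const card_ord mulr_natl.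
Qed.

Lemma mean_le_maximiser f k :
  (forall i, f i <= f k) -> \sum_i f i <= n%:R * f k.
Proof.
move=> maxf; apply: le_trans (ler_sum _ (fun i _ => maxf i)) _.
by rewrite sumr_const card_ord mulr_natl.
Qed.

Lemma sum_sq_le {f} {c : R} :
  (forall i, `|f i| <= c) -> \sum_i f i ^+ 2 <= n%:R * c ^+ 2.
Proof.
move=> fc; have sq i : f i ^+ 2 <= c ^+ 2.
  rewrite -real_normK ?num_real //.
  by apply: lerXn2r; rewrite ?nnegrE ?(le_trans _ (fc i)).
apply: le_trans (ler_sum _ (fun i _ => sq i)) _.
by rewrite sumr_const card_ord mulr_natl.
Qed.

End MinimumOverStates.

Section Simplex.
Context {R : realType} {n : nat}.
Hypothesis n_gt0 : (0 < n)%N.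
Implicit Types (mu : 'I_n -> R).

Let w : R := n%:R^-1.

Let nw : n%:R * w = 1.
Proof. by rewrite mulfV // pnatr_eq0 -lt0n. Qed.

Let w_gt0 : 0 < w.
Proof. by rewrite invr_gt0 ltr0n. Qed.

Lemma simplex_minimiser_le {mu i0} :
  simplex mu -> (forall k, mu i0 <= mu k) -> mu i0 <= w.
Proof.
move=> [_ sum1] /minimiser_le_mean; rewrite sum1 => h.
by rewrite -[w]mulr1 ler_pdivlMl ?ltr0n.
Qed.

Lemma simplex_maximiser_ge {mu k} :
  simplex mu -> (forall i, mu i <= mu k) -> w <= mu k.
Proof.
move=> [_ sum1] /mean_le_maximiser; rewrite sum1 => h.
by rewrite -[w]mulr1 ler_pdivrMl ?ltr0n.
Qed.

Lemma simplex_deviation_le {mu} {delta : R} :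
  simplex mu -> 0 <= delta -> (forall i, w - delta <= mu i) ->
  forall i, `|mu i - w| <= n%:R * delta.
Proof.
move=> [_ sum1] delta0 low i.
have n1 : 1 <= n%:R :> R by rewrite ler1n.
have total : \sum_k (mu k - w + delta) = n%:R * delta.
  rewrite big_split sumrB /= sum1 !sumr_const card_ord.
  by rewrite -[w *+ n]mulr_natl -[delta *+ n]mulr_natl nw subrr add0r.
have up : mu i - w + delta <= n%:R * delta.
  rewrite -total (bigD1 i) //= lerDl sumr_ge0 // => k _.
  by rewrite addrAC subr_ge0 -lerBlDr.
have weak : delta <= n%:R * delta by apply: ler_peMl.
by rewrite ler_norml; apply/andP; split; have := low i; lra.
Qed.

Lemma near_uniform_radius {eta : R} : 0 < eta ->
  exists2 delta, 0 < delta < w &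
    forall mu, simplex mu -> (forall i, w - delta <= mu i) ->
      Num.sqrt (\sum_i (mu i - n%:R^-1) ^+ 2) < eta.
Proof.
move=> eta0; pose e := Num.min eta 1.
have e0 : 0 < e by rewrite lt_min eta0 ltr01.
have e1 : e <= 1 by rewrite ge_min lexx orbT.
have w1 : w <= 1 by rewrite invf_le1 ?ler1n ?ltr0n.
exists (e * w ^+ 2 / 2).
  apply/andP; split; first by rewrite !mulr_gt0 ?exprn_gt0.
  have eww : e * w * w <= w.
    by apply: ler_piMl; [exact: ltW | exact: mulr_ile1 (ltW e0) (ltW w_gt0) e1 w1].
  by rewrite expr2 mulrA; have := w_gt0; lra.
move=> mu Hmu low; apply: (@lt_le_trans _ _ e); last by rewrite ge_min lexx.
rewrite -(ger0_norm (ltW e0)) -sqrtr_sqr ltr_sqrt ?exprn_gt0 //.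
apply: le_lt_trans (sum_sq_le (simplex_deviation_le Hmu _ low)) _.
  by rewrite !mulr_ge0 ?exprn_ge0 // ltW.
have -> : n%:R * (n%:R * (e * w ^+ 2 / 2)) ^+ 2 = e ^+ 2 * w * (n%:R * w) ^+ 3 / 4.
  by field.
rewrite nw expr1n mulr1; have e2 : 0 < e ^+ 2 by rewrite exprn_gt0.
have : e ^+ 2 * w <= e ^+ 2 by apply: ler_piMr; rewrite // ltW.
lra.
Qed.

End Simplex.

Section Payoffs.
Context {R : realType} {n : nat} {Ecal : experiment R n -> Prop}
  {C : experiment R n -> ('I_n -> R) -> \bar R}.

Lemma W_ge_no_info (u d : R) mu :
  (u%:E - d%:E * emin mu <= W Ecal C u d mu)%E.
Proof. by rewrite /W le_max lexx. Qed.

Lemma W_ge_experiment (u d : R) mu E :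
  Ecal E -> (u%:E - d%:E * int_min E mu - C E mu <= W Ecal C u d mu)%E.
Proof.
move=> HE; rewrite /W le_max; apply/orP; right.
by apply: ereal_sup_ubound; exists E.
Qed.

Lemma experiment_payoff_ge {E : experiment R n} {mu} {u d m eps T : R} {c} :
  0 < d -> emin mu = m%:E -> (eps%:E < Upsilon E mu)%E ->
  (0 <= c)%E -> (c <= T%:E)%E ->
  ((u - d * m + d * eps - T)%:E <= u%:E - d%:E * int_min E mu - c)%E.
Proof.
rewrite /Upsilon => d0 ->; case: (int_min E mu) => [r| |] //.
  rewrite -EFinB lte_fin => gain.
  case: c => [c| |] //; rewrite !lee_fin => _ cT.
  have : d * r <= d * (m - eps) by rewrite ler_pM2l //; lra.
  lra.
case: c => [c| |] // _ _ _.
by rewrite mulrNy gtr0_sg // mul1e /= addey // addye // leey.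
Qed.

(* Every announcement exposes the uninformed Bob to a state of
   probability at least 1/n. *)
Lemma uninformed_value_le (u d : R) : (0 < n)%N -> 0 <= d ->
  (@uninformed_value R n u d <= (u - d / n%:R)%:E)%E.
Proof.
move=> n0 d0; apply: ge_ereal_sup => _ [sigma Hsigma <-].
have [k _ maxk] := emin_attained (fun i => - sigma i) (Ordinal n0).
have wk : n%:R^-1 <= sigma k.
  by apply: (simplex_maximiser_ge n0 Hsigma) => i; rewrite -lerN2 maxk.
apply: le_trans (emin_le _ k) _.
by rewrite lee_fin lerD2l lerN2 ler_wpM2l.
Qed.

End Payoffs.

Theorem theorem1 (R : realType) (n : nat) (Ecal : experiment R n -> Prop)
  (C : experiment R n -> ('I_n -> R) -> \bar R) :
  (2 <= n)%N ->
  (forall E mu, Ecal E -> @simplex R n mu -> (0 <= C E mu)%E) ->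
  assumptionA Ecal C ->
  exists u d : R, 0 < u /\ 0 < d /\ screens Ecal C u d.
Proof.
move=> n2 Cge0 [eps [eta [T [eps0 [eta0 [T0 HA]]]]]].
have n0 : (0 < n)%N by apply: leq_trans n2.
have [delta /andP[delta0 delta_w] near] := near_uniform_radius n0 eta0.
pose w : R := n%:R^-1; pose d := (T + 1) / eps.
pose g := Num.min 1 (d * delta).
have d0 : 0 < d by rewrite divr_gt0 //; lra.
have deps : d * eps = T + 1 by rewrite mulrVK // unitfE lt0r_neq0.
have g1 : g <= 1 by rewrite ge_min lexx.
have g_delta : g <= d * delta by rewrite ge_min lexx orbT.
have g0 : 0 < g by rewrite lt_min ltr01 mulr_gt0.
have dw : d * delta < d * w by rewrite ltr_pM2l.
exists (d * w - g), d; split; first lra.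
split=> //; split; last first.
  apply: le_lt_trans (uninformed_value_le _ _ n0 (ltW d0)) _.
  by rewrite lte_fin -/w; lra.
move=> mu Hmu; have [i0 Emin mini0] := emin_attained mu (Ordinal n0).
have mw : d * mu i0 <= d * w by rewrite ler_pM2l // simplex_minimiser_le.
have [far|close] := lerP (mu i0) (w - delta).
  (* far from uniform: no information suffices *)
  apply: le_trans (W_ge_no_info _ _ _); rewrite Emin -EFinM -EFinB lee_fin.
  have : d * mu i0 <= d * (w - delta) by rewrite ler_pM2l.
  lra.
(* close to uniform: buy the experiment provided by (A) *)
have low i : w - delta <= mu i by apply: ltW (lt_le_trans close (mini0 i)).
have [E [HE [gain costT]]] := HA mu Hmu (near mu Hmu low).
apply: le_trans (W_ge_experiment _ _ _ _ HE).
apply: le_trans (experiment_payoff_ge d0 Emin gain (Cge0 _ _ HE Hmu) costT).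
rewrite lee_fin; lra.
Qed.
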